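(* For any connected component $\gamma$ of $V_{reg,\Delta}$, the elements $A_\gamma(\sigma)=[C(\sigma)'_\gamma]$, $\sigma\in{\cal B}(\Delta)$, satisfy the relations $$A_\gamma(\sigma)=\sum_{\beta\in\sigma,\ c_{\alpha\beta}\ne0}\operatorname{sign}(c_{\alpha\beta})\,A_\gamma(\sigma\cup\{\alpha\}\setminus\{\beta\})$$ in the quotient group ${\cal C}_\Delta/{\cal LC}_\Delta$. Here $\sigma\in{\cal B}(\Delta)$ and $\alpha\in\Delta\setminus\sigma$ are arbitrary, and $\alpha=\sum_{\beta\in\sigma}c_{\alpha\beta}\beta$.
   Context: Let $V$ be a real vector space of dimension $r$, and $\Delta\subset V\setminus\{0\}$ finite, spanning $V$, with $\Delta=-\Delta$. ${\cal B}(\Delta)$ is the set of subsets of $\Delta$ forming a basis of $V$. Walls are hyperplanes spanned by $r-1$ linearly independent elements of $\Delta$, and $V_{reg,\Delta}$ is the complement of their union. For $A\subset V$, $[A]$ is its characteristic function. A polyhedral cone is $C(h_1,\dots,h_n)=\{\sum t_ih_i:t_i\ge0\}$; $C(\emptyset)=\{0\}$, and $C^0$ denotes the relative interior of $C$. ${\cal C}(V)$ is the additive group of $\mathbb Z$-valued functions on $V$ generated by characteristic functions of polyhedral cones. ${\cal C}_\Delta$ is its subgroup generated by the $[C(\kappa)]$ with $\kappa\subset\Delta$, and ${\cal LC}_\Delta$ is the subgroup generated by those $[C(\kappa)]$, $\kappa\subset\Delta$, for which $C(\kappa)$ contains a line. For $\sigma\in{\cal B}(\Delta)$ and $p=\sum_{\alpha\in\sigma}p_\alpha\alpha\in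 V_{reg,\Delta}$ (so all $p_\alpha\ne0$), set $$C(\sigma)'_p=C(\{\alpha\in\sigma:p_\alpha>0\})+C(\{\alpha\in\sigma:p_\alpha<0\})^0=\Big\{\sum_{\alpha\in\sigma}t_\alpha\alpha:\ t_\alpha\ge0\text{ if }p_\alpha>0,\ t_\alpha>0\text{ if }p_\alpha<0\Big\}.$$ This depends only on the connected component $\gamma$ of $V_{reg,\Delta}$ containing $p$, and is denoted $C(\sigma)'_\gamma$; its characteristic function lies in ${\cal C}_\Delta$. *)

(* V = 'rV[R]_n, R : realType (the reals), n = r = dim V. *)
From HB Require Import structures.
From mathcomp Require Import all_boot all_order all_algebra.
From mathcomp Require Import boolp reals.
Set Implicit Arguments. Unset Strict Implicit. Unset Printing Implicit Defensive.
Import Order.TTheory GRing.Theory Num.Theory.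
Local Open Scope ring_scope.

Section Defs.
Variables (R : realType) (n : nat).
Local Notation V := 'rV[R]_n.

Definition cone (kappa : seq V) : V -> Prop := fun v =>
  exists t : 'I_(size kappa) -> R,
    (forall i, 0 <= t i) /\ v = \sum_(i < size kappa) t i *: kappa`_i.

Definition chi (A : V -> Prop) : V -> int := fun v => if asbool (A v) then 1 else 0.

Definition contains_line (A : V -> Prop) : Prop :=
  exists p d : V, d != 0 /\ forall s : R, A (p + s *: d).

Definition in_gen (P : seq V -> Prop) (f : V -> int) : Prop :=
  exists l : seq (int * seq V),
    (forall q, q \in l -> P q.2) /\
    forall v, f v = \sum_(q <- l) q.1 * chi (cone q.2) v.

Definition in_C (Delta : seq V) (f : V -> int) : Prop :=
  in_gen (fun kappa => {subset kappa <= Delta}) f.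
Definition in_LC (Delta : seq V) (f : V -> int) : Prop :=
  in_gen (fun kappa => {subset kappa <= Delta} /\ contains_line (cone kappa)) f.

Definition is_basis_in (Delta sigma : seq V) : Prop :=
  [/\ uniq sigma, {subset sigma <= Delta} & basis_of fullv sigma].

Definition Vreg (Delta : seq V) (p : V) : Prop :=
  forall w : seq V, {subset w <= Delta} -> size w = n.-1 -> free w ->
    p \notin <<w>>%VS.

Definition Cprime (sigma : seq V) (p : V) : V -> Prop := fun v =>
  exists c : 'I_(size sigma) -> R,
    p = \sum_(i < size sigma) c i *: sigma`_i /\
    exists t : 'I_(size sigma) -> R,
      v = \sum_(i < size sigma) t i *: sigma`_i /\
      forall i, (0 < c i -> 0 <= t i) /\ (c i < 0 -> 0 < t i).

(* A_gamma(sigma) = [C(sigma)'_p] for p in gamma *)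
Definition Agam (sigma : seq V) (p : V) : V -> int := chi (Cprime sigma p).

End Defs.

From HB Require Import structures.
From mathcomp Require Import all_boot all_order all_algebra.
From mathcomp Require Import boolp reals.
From mathcomp Require Import ring lra.
Set Implicit Arguments. Unset Strict Implicit. Unset Printing Implicit Defensive.
Import Order.TTheory GRing.Theory Num.Theory.
Local Open Scope ring_scope.

(* Write [v = \sum_i x_i sigma_i] and [p = \sum_i p_i sigma_i].  Since all [p_i] are
   nonzero, [v] lies in [C(sigma)'_p] iff [x_i + e p_i > 0] for all [i] and all small
   [e > 0]; likewise for the bases [sigma_j = sigma \cup {alpha} \ {sigma_j}] (c_j <> 0),
   in which [v] has coordinates [x_j / c_j] and [x_i - c_i x_j / c_j].
   Modulo LC_Delta, a set cut out by sign conditions on the coordinates along a basis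
   changes sign when one condition is replaced by its complement: together they give a
   set with one unconstrained coordinate, an alternating sum of cones containing a line.
   Reversing the conditions at the [i] with [c_i > 0] turns the relation into a pointwise
   identity: for the generic point [X = x + e p], either all ratios [X_i / c_i] (c_i <> 0)
   are negative or exactly one of them is the positive maximum. *)

Section GeneratedSubgroup.
Variables (R : realType) (n : nat) (P : seq 'rV[R]_n -> Prop).

Lemma in_gen0 : in_gen P (fun _ => 0).
Proof. by exists [::]; split=> // v; rewrite big_nil. Qed.

Lemma eq_in_gen f g : f =1 g -> in_gen P f -> in_gen P g.
Proof. by move=> e [l [lP fE]]; exists l; split=> // v; rewrite -e. Qed.

Lemma in_genD f g : in_gen P f -> in_gen P g -> in_gen P (fun v => f v + g v).
Proof.
move=> [l1 [l1P f1E]] [l2 [l2P f2E]]; exists (l1 ++ l2); split.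
  by move=> q; rewrite mem_cat => /orP[]; [apply: l1P | apply: l2P].
by move=> v; rewrite big_cat /= f1E f2E.
Qed.

Lemma in_genZ (k : int) f : in_gen P f -> in_gen P (fun v => k * f v).
Proof.
move=> [l [lP fE]]; exists [seq (k * q.1, q.2) | q <- l]; split.
  by move=> q /mapP[q' /lP ? ->].
by move=> v; rewrite fE big_map mulr_sumr; apply: eq_bigr => q _; rewrite mulrA.
Qed.

Lemma in_genB f g : in_gen P f -> in_gen P g -> in_gen P (fun v => f v - g v).
Proof.
by move=> Pf Pg; apply: eq_in_gen (in_genD Pf (in_genZ (-1) Pg)) => v; rewrite mulN1r.
Qed.

Lemma in_gen_sum (I : Type) (r : seq I) (Q : pred I) (F : I -> 'rV[R]_n -> int) :
  (forall i, Q i -> in_gen P (F i)) -> in_gen P (fun v => \sum_(i <- r | Q i) F i v).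
Proof.
move=> PF; elim: r => [|i r IHr].
  by apply: eq_in_gen in_gen0 => v; rewrite big_nil.
case Qi: (Q i).
  by apply: eq_in_gen (in_genD (PF i Qi) IHr) => v; rewrite big_cons Qi.
by apply: eq_in_gen IHr => v; rewrite big_cons Qi.
Qed.

Lemma in_gen_cone kappa : P kappa -> in_gen P (chi (cone kappa)).
Proof.
move=> Pk; exists [:: (1%:Z, kappa)]; split; first by move=> q; rewrite inE => /eqP ->.
by move=> v; rewrite big_seq1 mul1r.
Qed.

End GeneratedSubgroup.

Definition indic (A : Prop) : int := if `[< A >] then 1 else 0.

Lemma chiE (R : realType) n (A : 'rV[R]_n -> Prop) v : chi A v = indic (A v).
Proof. by []. Qed.

Lemma indicT (A : Prop) : A -> indic A = 1.
Proof. by move=> a; rewrite /indic asboolT. Qed.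

Lemma indicF (A : Prop) : ~ A -> indic A = 0.
Proof. by move=> a; rewrite /indic asboolF. Qed.

Lemma eq_indic (A B : Prop) : (A <-> B) -> indic A = indic B.
Proof. by move=> /propext ->. Qed.

Lemma indicU (A B C : Prop) : (C <-> A \/ B) -> ~ (A /\ B) ->
  indic A + indic B = indic C.
Proof.
move=> CE AB; have [a|na] := pselect A.
  by rewrite indicT ?(indicF (A := B)) ?indicT ?addr0 //; [tauto | move=> b; apply: AB].
have [b|nb] := pselect B.
  by rewrite (indicF na) !indicT ?add0r //; tauto.
by rewrite !indicF ?addr0 //; tauto.
Qed.

Inductive sign_cond := Ge0 | Gt0 | Le0 | Lt0 | Any.

Definition strict (s : sign_cond) : bool := if s is (Gt0 | Lt0) then true else false.

Definition compl (s : sign_cond) : sign_cond :=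
  match s with Ge0 => Lt0 | Lt0 => Ge0 | Gt0 => Le0 | Le0 => Gt0 | Any => Any end.

Definition flip_on (k : nat) (D : {set 'I_k}) (md : 'I_k -> sign_cond) :=
  fun i => if i \in D then compl (md i) else md i.

Definition set_cond (k : nat) (md : 'I_k -> sign_cond) (i : 'I_k) (s : sign_cond) :=
  fun j => if j == i then s else md j.

Section CoordinateSets.
Variables (R : realType) (n : nat).
Local Notation V := 'rV[R]_n.

Definition holds (s : sign_cond) (a : R) : Prop :=
  match s with
  | Ge0 => 0 <= a | Gt0 => 0 < a | Le0 => a <= 0 | Lt0 => a < 0 | Any => True
  end.

Lemma holds_compl s a : s <> Any -> holds (compl s) a <-> ~ holds s a.
Proof.
by case: s => //= _; [rewrite ltNge | rewrite leNgt | rewrite ltNge | rewrite leNgt];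
  split => /negP.
Qed.

Definition lcomb (b : seq V) (t : 'I_(size b) -> R) : V := \sum_(i < size b) t i *: b`_i.
Arguments lcomb : clear implicits.

Definition coordset (b : seq V) (md : 'I_(size b) -> sign_cond) (v : V) : Prop :=
  exists t, v = lcomb b t /\ forall i, holds (md i) (t i).
Arguments coordset : clear implicits.

Lemma lcomb_inj (b : seq V) t t' : free b -> lcomb b t = lcomb b t' -> t =1 t'.
Proof.
move=> fb e i; apply/eqP; rewrite -subr_eq0; apply/eqP.
apply: (@freeP _ _ _ (in_tuple b) fb (fun i => t i - t' i)) => /=.
by under eq_bigr => j _ do rewrite scalerBl; rewrite sumrB -/(lcomb b t) e subrr.
Qed.

Lemma coordsetE (b : seq V) md t v : free b -> v = lcomb b t ->
  coordset b md v <-> forall i, holds (md i) (t i).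
Proof.
move=> fb ->; split => [[t' [e ht']] i | ht]; last by exists t.
by rewrite (lcomb_inj fb e); apply: ht'.
Qed.

Lemma forall_set_cond (k : nat) (md : 'I_k -> sign_cond) i s (t : 'I_k -> R) :
  (forall j, holds (set_cond md i s j) (t j)) <->
  holds s (t i) /\ (forall j, j != i -> holds (md j) (t j)).
Proof.
rewrite /set_cond; split=> [h | [hi h] j].
  by split=> [|j /negPf ji]; [have := h i; rewrite eqxx | have := h j; rewrite ji].
by case: eqP => [-> | /eqP]; [| apply: h].
Qed.

Lemma chi_coordset_compl (b : seq V) md i v : free b -> md i <> Any ->
  chi (coordset b md) v + chi (coordset b (set_cond md i (compl (md i)))) v
  = chi (coordset b (set_cond md i Any)) v.
Proof.
move=> fb mdi; rewrite !chiE.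
have [[t vE]|nspan] := pselect (exists t, v = lcomb b t); last first.
  have no md' : ~ coordset b md' v by move=> [t [vE _]]; apply: nspan; exists t.
  by rewrite !indicF ?addr0.
have mdE : md = set_cond md i (md i).
  by apply: funext => j; rewrite /set_cond; case: eqP => [->|].
have hmd : (forall j, holds (md j) (t j)) <->
    holds (md i) (t i) /\ (forall j, j != i -> holds (md j) (t j)).
  by rewrite {1}mdE forall_set_cond.
have := holds_compl (t i) mdi.
move=> hc; have [hi|hi] := pselect (holds (md i) (t i));
  by apply: indicU; rewrite !(coordsetE _ fb vE) hmd !forall_set_cond /=; tauto.
Qed.

End CoordinateSets.
Arguments lcomb {R n} b t.
Arguments coordset {R n} b md v.

Section ClosedCoordinateSets.
Variables (R : realType) (n : nat).
Local Notation V := 'rV[R]_n.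

Lemma cone_nil (v : V) : cone [::] v <-> v = 0.
Proof.
split=> [[t [_ ->]] | ->]; first by rewrite big_ord0.
by exists (fun _ => 0); split=> //; rewrite big_ord0.
Qed.

Lemma cone_cons (x : V) L v :
  cone (x :: L) v <-> exists2 s, 0 <= s & cone L (v - s *: x).
Proof.
split=> [[t [t0 ->]] | [s s0 [t [t0 vE]]]].
  exists (t ord0) => //; exists (fun i => t (lift ord0 i)); split=> //.
  by rewrite big_ord_recl addrAC subrr add0r.
exists (fun i => if unlift ord0 i is Some j then t j else s); split.
  by move=> i; case: (unlift ord0 i).
rewrite big_ord_recl /= unlift_none -[v](subrK (s *: x)) vE addrC.
by congr (_ + _); apply: eq_bigr => i _; rewrite liftK.
Qed.

Lemma cone_cat (L1 L2 : seq V) v :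
  cone (L1 ++ L2) v <-> exists2 v1, cone L1 v1 & cone L2 (v - v1).
Proof.
elim: L1 v => [|x L1 IHL] v /=.
  split=> [h | [v1 /cone_nil -> ]]; last by rewrite subr0.
  by exists 0; rewrite ?subr0 //; apply/cone_nil.
rewrite cone_cons; split=> [[s s0 /IHL [v1 h1 h2]] | [v1 /cone_cons [s s0 h1] h2]].
  exists (s *: x + v1); last by rewrite opprD addrA.
  by apply/cone_cons; exists s; rewrite // addrAC subrr add0r.
exists s => //; apply/IHL; exists (v1 - s *: x) => //.
by rewrite opprB addrA subrK.
Qed.

Definition cond_gens (s : sign_cond) (x : V) : seq V :=
  match s with Ge0 => [:: x] | Le0 => [:: - x] | Any => [:: x; - x] | _ => [::] end.

Lemma cone_cond_gens s x v : ~~ strict s ->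
  cone (cond_gens s x) v <-> exists2 a, holds s a & v = a *: x.
Proof.
case: s => //= _; rewrite ?cone_cons.
- split=> [[s s0 /cone_nil /eqP] | [a a0 ->]]; first by rewrite subr_eq0 => /eqP ->; exists s.
  by exists a => //; apply/cone_nil; rewrite subrr.
- split=> [[s s0 /cone_nil /eqP] | [a a0 ->]].
    by rewrite subr_eq0 => /eqP ->; exists (- s); rewrite ?oppr_le0 // scalerN scaleNr.
  by exists (- a); rewrite ?oppr_ge0 //; apply/cone_nil; rewrite scaleNr scalerN opprK subrr.
split=> [[s1 _ /cone_cons [s2 _ /cone_nil /eqP]] | [a _ ->]].
  by rewrite subr_eq0 subr_eq => /eqP ->; exists (s1 - s2); rewrite // scalerN scalerBl addrC.
have [a0 | a0] := lerP 0 a.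
  by exists a => //; apply/cone_cons; exists 0; rewrite // scale0r subrr subr0; apply/cone_nil.
exists 0 => //; apply/cone_cons; exists (- a); first by rewrite oppr_ge0 ltW.
by apply/cone_nil; rewrite scale0r subr0 scaleNr scalerN opprK subrr.
Qed.

Definition coord_gens (b : seq V) (md : 'I_(size b) -> sign_cond) : seq V :=
  flatten [seq cond_gens (md k) b`_k | k <- index_enum 'I_(size b)].
Arguments coord_gens : clear implicits.

Lemma cone_flatten_cond_gens (b : seq V) (md : 'I_(size b) -> sign_cond)
    (r : seq 'I_(size b)) v :
  uniq r -> (forall k, ~~ strict (md k)) ->
  cone (flatten [seq cond_gens (md k) b`_k | k <- r]) v <->
  exists t : 'I_(size b) -> R,
    v = \sum_(k <- r) t k *: b`_k /\ forall k, k \in r -> holds (md k) (t k).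
Proof.
move=> + closed; elim: r v => [|k r IHr] v /=.
  move=> _; rewrite cone_nil; split=> [-> | [t [-> _]]]; last by rewrite big_nil.
  by exists (fun _ => 0); rewrite big_nil.
move=> /andP[kr ur]; rewrite cone_cat; split.
  move=> [v1 /(cone_cond_gens _ _ (closed k)) [a ha ->] /(IHr _ ur) [t [vE ht]]].
  exists (fun j => if j == k then a else t j); split.
    rewrite big_cons eqxx -[v](subrK (a *: b`_k)) vE addrC; congr (_ + _).
    by apply: eq_big_seq => j jr; case: eqP => // jk; move: kr; rewrite -jk jr.
  by move=> j; rewrite inE; case: eqP => [-> | _] //= /ht.
move=> [t [vE ht]]; exists (t k *: b`_k).
  by apply/(cone_cond_gens _ _ (closed k)); exists (t k) => //; apply: ht; rewrite inE eqxx.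
apply/(IHr _ ur); exists t; split; first by rewrite vE big_cons addrAC subrr add0r.
by move=> j jr; apply: ht; rewrite inE jr orbT.
Qed.

Lemma coordset_cone (b : seq V) md v : (forall k, ~~ strict (md k)) ->
  cone (coord_gens b md) v <-> coordset b md v.
Proof.
move=> closed; rewrite /coord_gens cone_flatten_cond_gens ?index_enum_uniq //.
by split=> [[t [vE ht]] | [t [vE ht]]]; exists t; split=> // k *; apply: ht;
  rewrite ?mem_index_enum.
Qed.

End ClosedCoordinateSets.
Arguments coord_gens {R n} b md.

Section LineCones.
Variables (R : realType) (n : nat) (Delta : seq 'rV[R]_n).
Hypothesis Delta_sym : forall x, x \in Delta -> - x \in Delta.
Variable b : seq 'rV[R]_n.
Hypotheses (b_free : free b) (b_Delta : {subset b <= Delta}).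

Lemma coord_gens_Delta md : (forall k, ~~ strict (md k)) ->
  {subset coord_gens b md <= Delta}.
Proof.
move=> closed y /flattenP[l /mapP[k _ ->]].
have bk : b`_k \in Delta by apply/b_Delta/mem_nth.
case: (md k) (closed k) => //= _; rewrite !inE;
  [move=> /eqP -> | move=> /eqP -> | case/orP => /eqP ->] => //; exact: Delta_sym.
Qed.

Lemma closed_coordset_Any_in_LC md i : (forall k, ~~ strict (md k)) -> md i = Any ->
  in_LC Delta (chi (coordset b md)).
Proof.
move=> closed mdi; apply: eq_in_gen (in_gen_cone (kappa := coord_gens b md) _) => [v | ].
  by rewrite !chiE; apply/eq_indic/coordset_cone.
split; first exact: coord_gens_Delta.
exists 0, b`_i; split; first by apply: (free_not0 b_free); apply: mem_nth.
move=> s; apply/coordset_cone => //; exists (fun k => if k == i then s else 0); split.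
  rewrite add0r /lcomb (bigD1 i) //= eqxx big1 ?addr0 // => k /negbTE ->.
  by rewrite scale0r.
by move=> k; case: eqP => [-> | _]; rewrite ?mdi //; case: (md k) (closed k) => //= _.
Qed.

Lemma coordset_Any_in_LC md i : md i = Any -> in_LC Delta (chi (coordset b md)).
Proof.
move: {2}#|[set k | strict (md k)]| (erefl #|[set k | strict (md k)]|) => N.
elim: N md => [|N IHN] md strictN mdi.
  apply: closed_coordset_Any_in_LC mdi => k; apply: contra_eqN strictN => sk.
  by rewrite -lt0n card_gt0; apply/set0Pn; exists k; rewrite inE.
have /set0Pn[k] : [set k | strict (md k)] != set0 by rewrite -card_gt0 strictN.
rewrite inE => sk.
have mdk : md k <> Any by move=> e; rewrite e in sk.
have ki : k != i by apply/eqP => e; move: sk; rewrite e mdi.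
have strict_set_cond s : ~~ strict s -> #|[set j | strict (set_cond md k s j)]| = N.
  move=> ns; have -> : [set j | strict (set_cond md k s j)] = [set j | strict (md j)] :\ k.
    apply/setP => j; rewrite !inE /set_cond.
    by case: eqVneq => [-> |] //=; rewrite (negbTE ns).
  by apply/succn_inj; rewrite -strictN (cardsD1 k [set j | strict (md j)]) inE sk.
have set_cond_i s : set_cond md k s i = Any by rewrite /set_cond eq_sym (negbTE ki).
have ns : ~~ strict (compl (md k)) by case: (md k) sk.
apply: eq_in_gen (in_genB (IHN _ (strict_set_cond Any isT) (set_cond_i _))
                          (IHN _ (strict_set_cond _ ns) (set_cond_i _))) => v.
by rewrite -(chi_coordset_compl v b_free mdk) addrK.
Qed.

Lemma coordset_flip_in_LC md (D : {set 'I_(size b)}) : (forall i, i \in D -> md i <> Any) ->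
  in_LC Delta (fun v => chi (coordset b md) v
                        - (-1) ^+ #|D| * chi (coordset b (flip_on D md)) v).
Proof.
move: {2}#|D| (erefl #|D|) => N.
elim: N D => [|N IHN] D DN DAny.
  have -> : flip_on D md = md by apply: funext => k; rewrite /flip_on (card0_eq DN).
  by apply: eq_in_gen (in_gen0 _) => v; rewrite DN expr0 mul1r subrr.
have /set0Pn[k kD] : D != set0 by rewrite -card_gt0 DN.
have DkN : #|D :\ k| = N by apply/succn_inj; rewrite -DN (cardsD1 k D) kD.
have DkAny i : i \in D :\ k -> md i <> Any by rewrite inE => /andP[_ /DAny].
have flip_k : flip_on (D :\ k) md k = md k by rewrite /flip_on !inE eqxx.
have flipE : flip_on D md = set_cond (flip_on (D :\ k) md) k (compl (flip_on (D :\ k) md k)).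
  apply: funext => j; rewrite /set_cond /flip_on !inE; case: eqP => [-> | _] //=.
  by rewrite kD eqxx.
have flip_kAny : flip_on (D :\ k) md k <> Any by rewrite flip_k; apply: DAny.
have set_cond_k : set_cond (flip_on (D :\ k) md) k Any k = Any by rewrite /set_cond eqxx.
apply: eq_in_gen (in_genD (IHN _ DkN DkAny)
                          (in_genZ ((-1) ^+ N) (coordset_Any_in_LC set_cond_k))) => v.
by rewrite -(chi_coordset_compl v b_free flip_kAny) -flipE DN exprS DkN; ring.
Qed.

End LineCones.

Section SmallPerturbations.
Variable R : realType.

Definition near0 (A : R -> Prop) := exists2 d : R, 0 < d & forall e, 0 < e -> e < d -> A e.

Lemma near0W (A B : R -> Prop) : (forall e, A e -> B e) -> near0 A -> near0 B.
Proof. by move=> AB [d d0 h]; exists d => // e e0 ed; apply/AB/h. Qed.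

Lemma near0_pos (A : R -> Prop) : (forall e, 0 < e -> A e) -> near0 A.
Proof. by move=> h; exists 1 => // e e0 _; apply: h. Qed.

Lemma near0_and (A B : R -> Prop) : near0 A -> near0 B -> near0 (fun e => A e /\ B e).
Proof.
move=> [d1 d10 h1] [d2 d20 h2]; exists (Order.min d1 d2); first by rewrite lt_min d10 d20.
by move=> e e0; rewrite lt_min => /andP[e1 e2]; split; [apply: h1 | apply: h2].
Qed.

Lemma near0_forall (I : finType) (A : I -> R -> Prop) :
  (forall i, near0 (A i)) -> near0 (fun e => forall i, A i e).
Proof.
move=> h; suff : near0 (fun e => forall i, i \in enum I -> A i e).
  by apply: near0W => e h' i; apply: h'; rewrite mem_enum.
elim: (enum I) => [|i r IHr]; first exact: near0_pos.
apply: near0W (near0_and (h i) IHr) => e [h1 h2] j; rewrite inE => /orP[/eqP -> | /h2] //.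
Qed.

Lemma near0_ex (A : R -> Prop) : near0 A -> exists e, A e.
Proof. by move=> [d d0 h]; exists (d / 2); apply: h; rewrite ?divr_gt0 //; lra. Qed.

Lemma near0_lt (a b : R) : 0 < a -> near0 (fun e => 0 < a + e * b).
Proof.
move=> a0; have b1 : 0 < `|b| + 1 by have := normr_ge0 b; lra.
exists (a / (`|b| + 1)) => [|e e0]; first by rewrite divr_gt0.
rewrite ltr_pdivlMr // mulrDr mulr1 => ea.
have nb : - b <= `|b| by rewrite -normrN ler_norm.
have : 0 <= e * (b + `|b|) by apply: mulr_ge0; [exact: ltW | lra].
lra.
Qed.

Lemma near0_not_lt (a b : R) : ~ (0 < a \/ a = 0 /\ 0 < b) ->
  near0 (fun e => ~ 0 < a + e * b).
Proof.
move=> nab; have [a0 | a0 | a0] := ltrgtP 0 a; first by case: nab; left.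
  have na : 0 < - a by rewrite oppr_gt0.
  by apply: near0W (near0_lt (- b) na) => e h1 h2; lra.
have b0 : b <= 0 by rewrite leNgt; apply/negP => b0; apply: nab; right.
by apply: near0_pos => e e0; apply/negP; rewrite -a0 add0r -leNgt mulr_ge0_le0 // ltW.
Qed.

Lemma near0_lex (a b : R) : near0 (fun e => 0 < a + e * b) <-> 0 < a \/ a = 0 /\ 0 < b.
Proof.
split=> [h | [a0 | [-> b0]]]; last 2 first.
- exact: near0_lt.
- by apply: near0_pos => e e0; rewrite add0r mulr_gt0.
apply: contrapT => /near0_not_lt nh.
by have [e []] := near0_ex (near0_and h nh).
Qed.

Lemma near0_decide (a b : R) :
  near0 (fun e => 0 < a + e * b <-> near0 (fun e => 0 < a + e * b)).
Proof.
have [ab | nab] := pselect (0 < a \/ a = 0 /\ 0 < b).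
  by apply: near0W ((near0_lex a b).2 ab) => e h; split=> // _; apply/near0_lex.
by apply: near0W (near0_not_lt nab) => e h; split=> [/h | /near0_lex /nab].
Qed.

Lemma near0_neq0 (a b : R) : b != 0 -> near0 (fun e => a + e * b != 0).
Proof.
move=> b0; have [a0 | a0 | <-] := ltrgtP 0 a.
- by apply: near0W (near0_lt b a0) => e; rewrite lt0r => /andP[].
- have na : 0 < - a by rewrite oppr_gt0.
  by apply: near0W (near0_lt (- b) na) => e h; apply/eqP => h'; lra.
- by apply: near0_pos => e e0; rewrite add0r mulf_neq0 // gt_eqF.
Qed.

(* The condition on a coordinate of a point of [C(sigma)'_p] when the corresponding
   coordinate of [p] is [q]. *)
Definition cprime_cond (q : R) : sign_cond := if 0 < q then Ge0 else Gt0.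

Lemma cprime_cond_neqAny (q : R) : cprime_cond q <> Any.
Proof. by rewrite /cprime_cond; case: ifP. Qed.

Lemma holds_cprime_cond (q a : R) : q != 0 ->
  holds (cprime_cond q) a <-> near0 (fun e => 0 < a + e * q).
Proof.
move=> q0; rewrite near0_lex /cprime_cond; case: ifP => qpos /=.
  rewrite le_eqVlt; split=> [/orP[/eqP <- | h] | [h | [-> _]]];
    [by right | by left | by rewrite h orbT | by rewrite eqxx].
by split=> [h | [h | [_ h]]]; [left | | rewrite h in qpos].
Qed.

Lemma holds_compl_cprime_cond (q a : R) : q != 0 ->
  holds (compl (cprime_cond q)) a <-> holds (cprime_cond (- q)) (- a).
Proof.
move=> q0; rewrite /cprime_cond oppr_gt0; case: ltrgtP q0 => //= q0 _.
- by rewrite oppr_gt0.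
- by rewrite oppr_ge0.
Qed.

Lemma holds_flip_cprime_cond (neg : bool) (q a : R) : q != 0 ->
  holds (if neg then compl (cprime_cond q) else cprime_cond q) a <->
  near0 (fun e => 0 < (-1) ^+ neg * (a + e * q)).
Proof.
move=> q0; case: neg.
  rewrite holds_compl_cprime_cond // holds_cprime_cond ?oppr_eq0 //.
  by split; apply: near0W => e; rewrite expr1 mulN1r opprD mulrN.
by rewrite holds_cprime_cond //; split; apply: near0W => e; rewrite mul1r.
Qed.

End SmallPerturbations.

Section RatioPartition.
Variables (R : realType) (m : nat).

Lemma indic_max_partition (J : pred 'I_m) (r : 'I_m -> R) :
  (forall j, J j -> r j != 0) -> {in J &, injective r} ->
  indic (forall j, J j -> r j < 0)
  + \sum_(j | J j) indic (0 < r j /\ forall i, J i -> i != j -> r i < r j) = 1.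
Proof.
move=> r_neq0 r_inj.
have [neg | /existsNP[i0 /not_implyP[Ji0 /negP]]] := pselect (forall j, J j -> r j < 0).
  rewrite indicT // big1 ?addr0 // => j Jj; apply: indicF => -[rj _].
  by have := neg j Jj; lra.
rewrite -leNgt le_eqVlt eq_sym (negbTE (r_neq0 _ Ji0)) /= => ri0.
rewrite indicF => [|neg]; last by have := neg i0 Ji0; lra.
have [jm Jjm jm_max] := @arg_maxP _ _ _ i0 J r Ji0.
have {}jm_max j : J j -> r j <= r jm by exact: jm_max.
rewrite add0r (bigD1 jm) //= indicT; last first.
  split=> [|i Ji ijm]; first by have := jm_max i0 Ji0; lra.
  by rewrite lt_neqAle jm_max // andbT; apply: contra ijm => /eqP/r_inj ->.
rewrite big1 ?addr0 // => j /andP[Jj jjm]; apply: indicF => -[_ jmax].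
by have := jmax jm Jjm; rewrite eq_sym jjm => /(_ isT); have := jm_max j Jj; lra.
Qed.

Variable c : 'I_m -> R.

Definition cpos := [set i | 0 < c i].

(* Coordinates along [sigma] with [sigma_j] replaced by [\sum_i c_i sigma_i]. *)
Definition rebase (j : 'I_m) (X : 'I_m -> R) : 'I_m -> R :=
  fun i => if i == j then X j / c j else X i - c i * (X j / c j).

Lemma rebase_lin j (x y : 'I_m -> R) e i :
  rebase j (fun k => x k + e * y k) i = rebase j x i + e * rebase j y i.
Proof. by rewrite /rebase; case: eqP => _; ring. Qed.

Lemma rebase_ratio j (X : 'I_m -> R) i : i != j -> c i != 0 ->
  rebase j X i = c i * (X i / c i - X j / c j).
Proof.
by move=> ij ci; rewrite /rebase (negbTE ij) mulrBr [c i * (X i / c i)]mulrC divfK.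
Qed.

(* Evaluated at [X = x + e p]: the reversed conditions of the cone of [sigma], those of
   [sigma_j], and the conditions left once the coordinates with [c_i <> 0] are free. *)
Definition sign_pattern0 (X : 'I_m -> R) := forall i, 0 < (-1) ^+ (i \in cpos) * X i.
Definition sign_pattern (j : 'I_m) (X : 'I_m -> R) :=
  forall i, 0 < (-1) ^+ (i \in cpos :\ j) * rebase j X i.
Definition pos_on_ker (X : 'I_m -> R) := forall i, c i == 0 -> 0 < X i.

Lemma signed_shift_gt0 (x a s : R) : a != 0 ->
  0 < (-1) ^+ (0 < a)%R * (x - a * s) <-> x / a < s.
Proof.
move=> a0; have [apos | aneg] := ltrP 0 a.
  by rewrite expr1 mulN1r ltr_pdivrMr //; split; nra.
have {aneg}aneg : a < 0 by rewrite lt_neqAle a0.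
by rewrite expr0 mul1r ltr_ndivrMr //; split; nra.
Qed.

Lemma sign_pattern0E X :
  sign_pattern0 X <-> pos_on_ker X /\ forall i, c i != 0 -> X i / c i < 0.
Proof.
have ratio i : c i != 0 -> 0 < (-1) ^+ (i \in cpos) * X i <-> X i / c i < 0.
  by move=> ci; rewrite -(signed_shift_gt0 _ 0 ci) inE mulr0 subr0.
have ker i : c i = 0 -> 0 < (-1) ^+ (i \in cpos) * X i <-> 0 < X i.
  by move=> ci; rewrite inE ci ltxx mul1r.
split=> [h | [hP hn] i].
  by split=> [i /eqP ci | i ci]; [apply/(ker _ ci) | apply/(ratio _ ci)].
by have [ci | ci] := eqVneq (c i) 0; [apply/(ker _ ci)/hP/eqP | apply/ratio/hn].
Qed.

Lemma sign_patternE j X : c j != 0 ->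
  sign_pattern j X <-> pos_on_ker X /\ 0 < X j / c j /\
    forall i, c i != 0 -> i != j -> X i / c i < X j / c j.
Proof.
move=> cj; rewrite /sign_pattern /rebase.
have at_j : 0 < (-1) ^+ (j \in cpos :\ j) * (X j / c j) <-> 0 < X j / c j.
  by rewrite !inE eqxx mul1r.
have ratio i : c i != 0 -> i != j ->
    0 < (-1) ^+ (i \in cpos :\ j) * (X i - c i * (X j / c j)) <-> X i / c i < X j / c j.
  by move=> ci ij; rewrite -(signed_shift_gt0 _ _ ci) !inE ij.
have ker i : c i = 0 ->
    0 < (-1) ^+ (i \in cpos :\ j) * (X i - c i * (X j / c j)) <-> 0 < X i.
  by move=> ci; rewrite !inE ci ltxx andbF mul1r mul0r subr0.
split=> [h | [hP [hj hn]] i].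
  split; [move=> i /eqP ci | split; [|move=> i ci ij]].
  - have ij : i != j by apply/eqP => e; move: cj; rewrite -e ci eqxx.
    by have := h i; rewrite (negbTE ij) => /(ker _ ci).
  - by have := h j; rewrite eqxx => /at_j.
  - by have := h i; rewrite (negbTE ij) => /(ratio _ ci ij).
have [-> | ij] := eqVneq i j; first exact/at_j.
have [ci | ci] := eqVneq (c i) 0.
  by apply/(ker _ ci)/hP/eqP.
exact/(ratio _ ci ij)/hn.
Qed.

Lemma indic_sign_patterns X :
  (forall j, c j != 0 -> X j != 0) ->
  {in [pred j | c j != 0] &, injective (fun i => X i / c i)} ->
  indic (sign_pattern0 X) + \sum_(j | c j != 0) indic (sign_pattern j X)
  = indic (pos_on_ker X).
Proof.
move=> X_neq0 X_inj.
have [P | nP] := pselect (pos_on_ker X); last first.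
  rewrite indicF => [|/sign_pattern0E[] //]; rewrite big1 ?addr0 ?indicF //.
  by move=> j cj; apply: indicF => /(sign_patternE _ cj)[].
rewrite (indicT P) -(indic_max_partition (J := fun j => c j != 0) _ X_inj); last first.
  by move=> j cj; rewrite mulf_neq0 ?invr_eq0 ?X_neq0.
congr (_ + _); first by apply: eq_indic; rewrite sign_pattern0E; tauto.
apply: eq_bigr => j cj; apply: eq_indic; rewrite sign_patternE //.
by split=> [[_ [h1 h2]] | [h1 h2]]; do ![split=> //] => i ci ij; apply: h2.
Qed.

End RatioPartition.

Section PerturbedCones.
Variables (R : realType) (n : nat).
Local Notation V := 'rV[R]_n.

Lemma Cprime_coordset (b : seq V) (q : 'I_(size b) -> R) p v :
  free b -> p = lcomb b q -> (forall i, q i != 0) ->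
  Cprime b p v <-> coordset b (fun i => cprime_cond (q i)) v.
Proof.
move=> fb pE q_neq0; split=> [[q' [pE' [t [vE ht]]]] | [t [vE ht]]].
  have q'E := lcomb_inj fb (etrans (esym pE') pE).
  exists t; split=> // i; have [h1 h2] := ht i; rewrite /cprime_cond -q'E.
  have [q'pos | q'neg] := ltrP 0 (q' i); first exact: h1.
  by apply: h2; rewrite lt_neqAle q'neg andbT q'E q_neq0.
exists q; split=> //; exists t; split=> // i; split=> qi; have := ht i; rewrite /cprime_cond.
  by rewrite qi.
by rewrite ltNge (ltW qi) /=.
Qed.

Lemma Vreg_coord_neq0 (Delta b : seq V) p (q : 'I_(size b) -> R) :
  Vreg Delta p -> free b -> {subset b <= Delta} -> size b = n ->
  p = lcomb b q -> forall i, q i != 0.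
Proof.
move=> p_reg fb bD bn pE i; apply/eqP => qi.
have bi : b`_i \in b by apply: mem_nth.
have ub := free_uniq fb.
have : p \in <<rem b`_i b>>%VS.
  rewrite pE; apply: memv_suml => k _; have [-> | ki] := eqVneq k i.
    by rewrite qi scale0r mem0v.
  apply/memvZ/memv_span; rewrite (mem_rem_uniq _ ub) inE mem_nth // andbT.
  by rewrite nth_uniq.
apply/negP/p_reg; first by move=> y /mem_rem /bD.
  by rewrite size_rem // bn.
by move: fb; rewrite (perm_free (perm_to_rem bi)) free_cons => /andP[].
Qed.

Lemma chi_coordset_near0 (b : seq V) (D : {set 'I_(size b)}) (P : pred 'I_(size b))
    (y q : 'I_(size b) -> R) v :
  free b -> v = lcomb b y -> (forall i, q i != 0) ->
  near0 (fun e =>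
    chi (coordset b (fun i => if P i then flip_on D (fun i => cprime_cond (q i)) i else Any)) v
    = indic (forall i, P i -> 0 < (-1) ^+ (i \in D) * (y i + e * q i))).
Proof.
move=> fb vE q_neq0.
have cond i : holds (if P i then flip_on D (fun i => cprime_cond (q i)) i else Any) (y i) <->
    (P i -> near0 (fun e => 0 < (-1) ^+ (i \in D) * (y i + e * q i))).
  rewrite /flip_on; case: (P i) => /=; last by split.
  by rewrite holds_flip_cprime_cond //; split=> [h _ | /(_ isT)].
have := near0_forall (fun i =>
  near0_decide ((-1) ^+ (i \in D) * y i) ((-1) ^+ (i \in D) * q i)).
apply: near0W => e dec; rewrite chiE; apply: eq_indic; rewrite (coordsetE _ fb vE).
have {}dec i : 0 < (-1) ^+ (i \in D) * (y i + e * q i) <->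
    near0 (fun e => 0 < (-1) ^+ (i \in D) * (y i + e * q i)).
  have sE e' : (-1) ^+ (i \in D) * (y i + e' * q i)
      = (-1) ^+ (i \in D) * y i + e' * ((-1) ^+ (i \in D) * q i) by ring.
  by rewrite sE dec; split; apply: near0W => e' h; [rewrite sE | rewrite -sE].
split=> [h i Pi | h i]; first by apply/dec; apply: (cond i).1.
by apply/(cond i).2 => Pi; apply/dec; apply: h.
Qed.

End PerturbedCones.

Section ExchangeRelation.
Variables (R : realType) (n : nat) (Delta : seq 'rV[R]_n).
Hypotheses (Delta_nz : 0 \notin Delta) (Delta_sym : forall x, x \in Delta -> - x \in Delta).
Variables (p alpha : 'rV[R]_n) (sigma : seq 'rV[R]_n) (c : 'I_(size sigma) -> R).
Hypotheses (p_reg : Vreg Delta p) (sigma_B : is_basis_in Delta sigma).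
Hypotheses (alpha_D : alpha \in Delta) (alphaE : alpha = lcomb sigma c).
Local Notation m := (size sigma).

Let sigma_basis : basis_of fullv sigma. Proof. by case: sigma_B. Qed.
Let sigma_free : free sigma. Proof. exact: basis_free sigma_basis. Qed.
Let sigma_Delta : {subset sigma <= Delta}. Proof. by case: sigma_B. Qed.

Let size_sigma : m = n.
Proof.
by have := size_basis (X := in_tuple sigma) sigma_basis; rewrite dimvf /dim /= mul1n => <-.
Qed.

Definition coords (v : 'rV[R]_n) (i : 'I_m) : R := coord (in_tuple sigma) i v.

Lemma lcomb_coords v : v = lcomb sigma (coords v).
Proof. by apply: coord_span; rewrite (span_basis sigma_basis) memvf. Qed.

Definition exchange (j : 'I_m) := set_nth 0 sigma j alpha.

Lemma size_exchange j : size (exchange j) = m.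
Proof. by rewrite size_set_nth; apply/maxn_idPr. Qed.

(* [size (exchange j) = m] holds only propositionally, hence the cast. *)
Definition on_exchange j (y : 'I_m -> R) (k : 'I_(size (exchange j))) : R :=
  y (cast_ord (size_exchange j) k).
Arguments on_exchange : clear implicits.

Lemma lcomb_exchange j y : lcomb (exchange j) (on_exchange j y) =
  lcomb sigma (fun i => (if i == j then 0 else y i) + y j * c i).
Proof.
rewrite /lcomb (reindex (cast_ord (esym (size_exchange j)))); last first.
  by apply: onW_bij; exists (cast_ord (size_exchange j)) => k; rewrite ?cast_ordK ?cast_ordKV.
under eq_bigr => i _ do rewrite /on_exchange cast_ordKV /exchange nth_set_nth /=.
under [RHS]eq_bigr => i _ do rewrite scalerDl -scalerA.
rewrite big_split /= -scaler_sumr -/(lcomb sigma c) -alphaE (bigD1 j) //= eqxx.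
rewrite [X in _ = X + _](bigD1 j) //=.
rewrite eqxx scale0r add0r [RHS]addrC; congr (_ + _); apply: eq_bigr => i ij.
by rewrite (negbTE ij) (negbTE (ij : nat_of_ord i != j)).
Qed.
Lemma lcomb_exchange_rebase j (X : 'I_m -> R) : c j != 0 ->
  lcomb (exchange j) (on_exchange j (rebase c j X)) = lcomb sigma X.
Proof.
move=> cj; rewrite lcomb_exchange; apply: eq_bigr => i _; congr (_ *: _).
rewrite /rebase eqxx; case: eqP => [-> | _]; first by rewrite add0r divfK.
by rewrite [_ * c i]mulrC subrK.
Qed.

Lemma exchange_free j : c j != 0 -> free (exchange j).
Proof.
move=> cj; apply/(@freeP _ _ _ (in_tuple (exchange j))) => t t0 k.
pose y i := t (cast_ord (esym (size_exchange j)) i).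
have tE : t = on_exchange j y by apply: funext => k'; rewrite /on_exchange /y cast_ordK.
have : lcomb sigma (fun i => (if i == j then 0 else y i) + y j * c i) = lcomb sigma (fun=> 0).
  rewrite -lcomb_exchange -tE; transitivity (0 : 'rV[R]_n); first exact: t0.
  by rewrite /lcomb big1 // => i _; rewrite scale0r.
move=> /(lcomb_inj sigma_free) coef0.
have yj : y j = 0.
  by have := coef0 j; rewrite eqxx add0r => /eqP; rewrite mulf_eq0 (negbTE cj) orbF => /eqP.
rewrite tE /on_exchange; have := coef0 (cast_ord (size_exchange j) k).
by case: eqP => [-> _ | _]; rewrite ?yj // mul0r addr0.
Qed.

Lemma exchange_Delta j : {subset exchange j <= Delta}.
Proof.
move=> y /(nthP 0)[k k_lt <-]; rewrite nth_set_nth /=; case: eqP => _ //.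
by apply/sigma_Delta/mem_nth; rewrite -(size_exchange j).
Qed.

Lemma coords_p_neq0 i : coords p i != 0.
Proof. exact: Vreg_coord_neq0 p_reg sigma_free sigma_Delta size_sigma (lcomb_coords p) i. Qed.

Lemma lcomb_coords_exchange j v : c j != 0 ->
  v = lcomb (exchange j) (on_exchange j (rebase c j (coords v))).
Proof. by move=> cj; rewrite lcomb_exchange_rebase // -lcomb_coords. Qed.

Lemma rebase_coords_p_neq0 j : c j != 0 -> forall i, rebase c j (coords p) i != 0.
Proof.
move=> cj i; have := Vreg_coord_neq0 p_reg (exchange_free cj) (@exchange_Delta j)
  (etrans (size_exchange j) size_sigma) (lcomb_coords_exchange p cj)
  (cast_ord (esym (size_exchange j)) i).
by rewrite /on_exchange cast_ordKV.
Qed.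

Definition cpos_exchange j : {set 'I_(size (exchange j))} :=
  cast_ord (size_exchange j) @^-1: (cpos c :\ j).

Definition pattern0 := flip_on (cpos c) (fun i => cprime_cond (coords p i)).

Definition pattern_exchange j :=
  flip_on (cpos_exchange j) (fun k => cprime_cond (on_exchange j (rebase c j (coords p)) k)).
Arguments pattern_exchange : clear implicits.

Definition pattern_ker (i : 'I_m) :=
  if c i == 0 then flip_on set0 (fun i => cprime_cond (coords p i)) i else Any.

Lemma sgz_card_cpos_exchange j : c j != 0 ->
  sgz (c j) * (-1) ^+ #|cpos_exchange j| = - (-1) ^+ #|cpos c| :> int.
Proof.
move=> cj; rewrite on_card_preimset; last first.
  apply: onW_bij; exists (cast_ord (esym (size_exchange j))) => k.
    exact: cast_ordK.
  exact: cast_ordKV.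
rewrite (cardsD1 j (cpos c)) inE; case: ltrgtP cj => // cj _.
- by rewrite gtr0_sgz // add1n exprS mul1r mulN1r opprK.
- by rewrite ltr0_sgz // add0n mulN1r.
Qed.

Lemma Agam_flip_in_LC : in_LC Delta (fun v =>
  Agam sigma p v - (-1) ^+ #|cpos c| * chi (coordset sigma pattern0) v).
Proof.
have := coordset_flip_in_LC Delta_sym sigma_free sigma_Delta
  (fun i _ => cprime_cond_neqAny (q := coords p i)) (D := cpos c).
apply: eq_in_gen => v; rewrite /Agam !chiE; congr (_ - _ * _).
by apply: eq_indic; symmetry; exact: Cprime_coordset v sigma_free (lcomb_coords p) coords_p_neq0.
Qed.

Lemma Agam_exchange_in_LC j : c j != 0 -> in_LC Delta (fun v =>
  sgz (c j) * Agam (exchange j) p v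
  + (-1) ^+ #|cpos c| * chi (coordset (exchange j) (pattern_exchange j)) v).
Proof.
move=> cj.
have := coordset_flip_in_LC Delta_sym (exchange_free cj) (@exchange_Delta j)
  (fun k _ => cprime_cond_neqAny (q := on_exchange j (rebase c j (coords p)) k))
  (D := cpos_exchange j).
move=> /(in_genZ (sgz (c j))); apply: eq_in_gen => v.
rewrite mulrBr mulrA sgz_card_cpos_exchange // mulNr opprK /Agam !chiE.
congr (_ * _ + _).
apply: eq_indic; symmetry.
exact: Cprime_coordset v (exchange_free cj) (lcomb_coords_exchange p cj)
  (fun k => rebase_coords_p_neq0 cj _).
Qed.

Lemma pattern_ker_in_LC : in_LC Delta (chi (coordset sigma pattern_ker)).
Proof.
have [j cj] : exists j, c j != 0.
  apply: contrapT => /forallNP c0.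
  have alpha0 : alpha = 0.
    rewrite alphaE /lcomb big1 // => i _.
    by case: (eqVneq (c i) 0) (c0 i) => [-> _ | _ /(_ isT)]; rewrite ?scale0r.
  by move: Delta_nz; rewrite -alpha0 alpha_D.
apply: (coordset_Any_in_LC Delta_sym sigma_free sigma_Delta (i := j)).
by rewrite /pattern_ker (negbTE cj).
Qed.

Lemma chi_patterns v :
  chi (coordset sigma pattern0) v
  + \sum_(j | c j != 0) chi (coordset (exchange j) (pattern_exchange j)) v
  = chi (coordset sigma pattern_ker) v.
Proof.
pose X e i := coords v i + e * coords p i.
have E0 : near0 (fun e => chi (coordset sigma pattern0) v = indic (sign_pattern0 c (X e))).
  have := chi_coordset_near0 (cpos c) predT sigma_free (lcomb_coords v) coords_p_neq0.
  by apply: near0W => e E; apply: (etrans E); apply: eq_indic; split=> h i *; apply: h.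
have EA : near0 (fun e => chi (coordset sigma pattern_ker) v = indic (pos_on_ker c (X e))).
  have := chi_coordset_near0 set0 [pred i | c i == 0] sigma_free (lcomb_coords v)
    coords_p_neq0.
  apply: near0W => e E; apply: (etrans E); apply: eq_indic.
  by split=> h i /h; rewrite in_set0 mul1r.
have Ex : near0 (fun e => forall j, c j != 0 ->
    chi (coordset (exchange j) (pattern_exchange j)) v = indic (sign_pattern c j (X e))).
  apply: near0_forall => j; have [cj | cj] := eqVneq (c j) 0.
    exact: near0_pos.
  have := chi_coordset_near0 (cpos_exchange j) predT (exchange_free cj)
    (lcomb_coords_exchange v cj)
    (fun k => rebase_coords_p_neq0 cj (cast_ord (size_exchange j) k)).
  apply: near0W => e E _; apply: (etrans E); apply: eq_indic.
  have inD k : (k \in cpos_exchange j) = (cast_ord (size_exchange j) k \in cpos c :\ j).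
    by rewrite !inE.
  split=> h i.
    have := h (cast_ord (esym (size_exchange j)) i) isT.
    by rewrite /X rebase_lin inD /on_exchange cast_ordKV.
  by move=> _; have := h (cast_ord (size_exchange j) i); rewrite /X rebase_lin inD.
have Xneq0 : near0 (fun e => forall j, c j != 0 -> X e j != 0).
  apply: near0_forall => j; apply: near0W (near0_neq0 (coords v j) (coords_p_neq0 j)).
  by move=> e.
have Xinj : near0 (fun e => {in [pred j | c j != 0] &, injective (fun i => X e i / c i)}).
  suff : near0 (fun e => forall i j, c i != 0 -> c j != 0 -> i != j ->
      X e i / c i != X e j / c j).
    apply: near0W => e h i j ci cj fij; apply/eqP; apply: contraT => ij.
    by move: (h i j ci cj ij); rewrite fij eqxx.
  apply: near0_forall => i; apply: near0_forall => j.
  have [ci | ci] := eqVneq (c i) 0; first exact: near0_pos.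
  have [cj | cj] := eqVneq (c j) 0; first exact: near0_pos.
  have [-> | ij] := eqVneq i j; first exact: near0_pos.
  have gap : coords p i / c i - coords p j / c j != 0.
    by have := rebase_coords_p_neq0 cj i; rewrite rebase_ratio // mulf_eq0 negb_or => /andP[].
  apply: near0W (near0_neq0 (coords v i / c i - coords v j / c j) gap) => e h _ _ _.
  rewrite -subr_eq0; apply: contra h => /eqP h; apply/eqP; rewrite -h /X.
  by field; rewrite ci cj.
(* A single small [e] gives every condition its limiting value and makes [X e] generic. *)
have [e [[[[E0e EAe] Exe] Xneq0e] Xinje]] :=
  near0_ex (near0_and (near0_and (near0_and (near0_and E0 EA) Ex) Xneq0) Xinj).
by rewrite E0e EAe (eq_bigr _ Exe); apply: indic_sign_patterns.
Qed.

End ExchangeRelation.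

Theorem mainTheorem17 (R : realType) (n : nat) (Delta : seq 'rV[R]_n)
  (Delta_nz : 0 \notin Delta)
  (Delta_span : (<<Delta>>%VS = fullv))
  (Delta_sym : forall x, x \in Delta -> - x \in Delta)
  (p : 'rV[R]_n) (p_reg : Vreg Delta p)
  (sigma : seq 'rV[R]_n) (sigma_B : is_basis_in Delta sigma)
  (alpha : 'rV[R]_n) (alpha_D : alpha \in Delta) (alpha_ns : alpha \notin sigma)
  (c : 'I_(size sigma) -> R)
  (c_def : alpha = \sum_(i < size sigma) c i *: sigma`_i) :
  in_LC Delta (fun v =>
    Agam sigma p v
    - \sum_(i < size sigma | c i != 0)
        sgz (c i) * Agam (set_nth 0 sigma i alpha) p v).
Proof.
have L0 := Agam_flip_in_LC Delta_sym c p_reg sigma_B.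
have Lx := Agam_exchange_in_LC Delta_sym p_reg sigma_B alpha_D c_def.
have Lker := pattern_ker_in_LC Delta_nz Delta_sym p sigma_B alpha_D c_def.
have := in_genD (in_genB L0 (in_gen_sum (index_enum _) Lx))
                (in_genZ ((-1) ^+ #|cpos c|) Lker).
apply: eq_in_gen => v; rewrite -(chi_patterns p_reg sigma_B alpha_D c_def v).
by rewrite big_split /= -mulr_sumr /exchange; ring.
Qed.
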